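(* Let $\gamma,\lambda\in(0,1)$, $H>1$ and $T\in(0,\infty)$. Let $g:[0,\infty)\to\mathbb R$ be a nonnegative continuous function with $|g(t)-g(s)|\le H|t-s|^\gamma$ for all $t,s\ge0$ and $g(0)=0$. Then $$\Big(\int_0^T g(t)\,dt\Big)^{\frac{\gamma\lambda+1}{\gamma+1}}\le N\,H^{1/\gamma}\int_0^T g(t)^\lambda\,dt,$$ where $N=N(\gamma,\lambda)$. *)

From HB Require Import structures.
From mathcomp Require Import all_boot all_order all_algebra.
From mathcomp Require Import all_classical all_reals all_analysis.
Set Implicit Arguments.
Unset Strict Implicit.
Unset Printing Implicit Defensive.

(* Let M = g t0 be the maximum of g on [0, T].  Since g = g^(1-l) g^l <= M^(1-l) g^l,
   we get  \int g <= M^(1-l) \int g^l.  Conversely, Hoelder continuity forces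
   g >= M/2 on [t0 - r, t0] with r = (M / (2H))^(1/gamma), and this interval lies in
   [0, T] because g 0 = 0; hence  r (M/2)^l <= \int g^l, that is
   M^(1/gamma + l) <= 2^(1/gamma + l) H^(1/gamma) \int g^l.  Eliminating M between
   the two bounds, which is possible because a = (gamma l + 1)/(gamma + 1) satisfies
   (1 - l) a = (1/gamma + l) (1 - a), yields the claim with N = 2^(1/gamma + l). *)

From HB Require Import structures.
From mathcomp Require Import all_boot all_order all_algebra.
From mathcomp Require Import all_classical all_reals all_analysis.
From mathcomp Require Import ring lra.
Import Order.TTheory GRing.Theory Num.Theory.
Import numFieldNormedType.Exports.
Local Open Scope classical_set_scope.
Local Open Scope ring_scope.

Section powR_facts.
Variable R : realType.
Implicit Types x M C I J a e l p r : R.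

Lemma powRVrK x r : 0 <= x -> r != 0 -> (x `^ r^-1) `^ r = x.
Proof. by move=> x0 r0; rewrite -powRrM mulVf ?powRr1. Qed.

Lemma powRVl x r : 0 < x -> (x^-1) `^ r = (x `^ r)^-1.
Proof. by move=> x0; rewrite -powR_inv1 ?ltW// -powRrM mulN1r powRN. Qed.

Lemma powR_ge1 x r : 1 <= x -> 0 <= r -> 1 <= x `^ r.
Proof. by move=> x1 r0; rewrite -[leLHS](powRr0 x); apply: ler_powR. Qed.

Lemma le_powRB_mul_powR x M l : 0 <= x <= M -> 0 <= l <= 1 ->
  x <= M `^ (1 - l) * x `^ l.
Proof.
move=> /andP[x0 xM] /andP[l0 l1].
rewrite -[leLHS](powRr1 x0) -[in leLHS](subrK l 1) powRD ?subrK ?oner_eq0//.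
by rewrite ler_wpM2r ?powR_ge0// ge0_ler_powR ?nnegrE ?subr_ge0// (le_trans x0).
Qed.

Lemma powR_le_interpolate I J M C a p e :
  0 <= I -> 0 <= J -> 0 <= M -> 1 <= C -> 0 <= a <= 1 -> p * a = e * (1 - a) ->
  I <= M `^ p * J -> M `^ e <= C * J -> I `^ a <= C * J.
Proof.
move=> I0 J0 M0 C1 /andP[a0 a1] pae IMJ MCJ.
have C0 : 0 <= C by apply: le_trans C1.
have a'0 : 0 <= 1 - a by rewrite subr_ge0.
apply: (@le_trans _ _ ((M `^ p * J) `^ a)).
  by rewrite ge0_ler_powR ?nnegrE ?mulr_ge0 ?powR_ge0.
rewrite powRM ?powR_ge0// -powRrM pae powRrM.
apply: (@le_trans _ _ ((C * J) `^ (1 - a) * J `^ a)).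
  by rewrite ler_wpM2r ?powR_ge0// ge0_ler_powR ?nnegrE ?powR_ge0 ?mulr_ge0.
rewrite powRM// -mulrA -powRD ?subrK ?oner_eq0// powRr1//.
by rewrite ler_wpM2r// ler1_powR// gerBl.
Qed.

End powR_facts.

Section Rintegral_bounds.
Context {d} {T : measurableType d} {R : realType} (mu : {measure set T -> \bar R}).

Lemma ge0_subset_Rintegral (A B : set T) (f : T -> R) :
  measurable A -> measurable B -> A `<=` B -> (forall x, B x -> 0 <= f x) ->
  mu.-integrable B (EFin \o f) ->
  \int[mu]_(x in A) f x <= \int[mu]_(x in B) f x.
Proof.
move=> mA mB AB f0 iB.
have iA : mu.-integrable A (EFin \o f) by exact: integrableS iB.
rewrite /Rintegral fine_le ?integrable_fin_num//.
apply: ge0_subset_integral => //; first exact: measurable_int iB.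
Qed.

Lemma Rintegral_le_powRB_mul (D : set T) (f : T -> R) (M l : R) :
  measurable D -> 0 <= l <= 1 -> (forall x, D x -> 0 <= f x <= M) ->
  mu.-integrable D (EFin \o f) -> mu.-integrable D (EFin \o (fun x => f x `^ l)) ->
  \int[mu]_(x in D) f x <= M `^ (1 - l) * \int[mu]_(x in D) f x `^ l.
Proof.
move=> mD l01 fM iD ilD; rewrite -RintegralZl//.
apply: le_Rintegral => //; last by move=> x Dx; exact: le_powRB_mul_powR (fM x Dx) l01.
by apply: eq_integrable (integrableZl _ (M `^ (1 - l)) ilD).
Qed.

End Rintegral_bounds.

Section lebesgue_integral_bounds.
Variable R : realType.
Local Notation mu := (@lebesgue_measure R).

Lemma lebesgue_measure_itv_cc_lty (a b : R) : (mu `[a, b] < +oo)%E.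
Proof. by rewrite lebesgue_measure_itv; case: ifP => _; rewrite ?ltry// -EFinD ltry. Qed.

Lemma lebesgue_measure_itv_cc (a b : R) : a <= b -> fine (mu `[a, b]) = b - a.
Proof.
rewrite lebesgue_measure_itv/= lte_fin le_eqVlt => /predU1P[->|->//].
by rewrite ltxx subrr.
Qed.

Lemma bounded_itv_cc_integrable (a b C : R) (f : R -> R) :
  measurable_fun `[a, b] f -> (forall x, x \in `[a, b] -> `|f x| <= C) ->
  mu.-integrable `[a, b] (EFin \o f).
Proof.
move=> mf fC; apply: measurable_bounded_integrable => //.
  exact: lebesgue_measure_itv_cc_lty.
exists C; split; first exact: num_real.
by move=> y Cy x xab; exact: le_trans (fC x xab) (ltW Cy).
Qed.

Lemma itv_cc_mul_le_Rintegral (D : set R) (f : R -> R) (a b c : R) :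
  measurable D -> `[a, b] `<=` D -> a <= b -> (forall x, D x -> 0 <= f x) ->
  mu.-integrable D (EFin \o f) -> (forall x, x \in `[a, b] -> c <= f x) ->
  (b - a) * c <= \int[mu]_(x in D) f x.
Proof.
move=> mD abD ab f0 iD cf.
apply: le_trans (ge0_subset_Rintegral mu _ _ _ _ mD abD f0 iD) => //.
have -> : (b - a) * c = \int[mu]_(x in `[a, b]) c.
  by rewrite Rintegral_cst// lebesgue_measure_itv_cc// mulrC.
apply: le_Rintegral => //; last by apply: integrableS iD.
exact: (@bounded_itv_cc_integrable _ _ `|c|).
Qed.

End lebesgue_integral_bounds.

Section holder_peak.
Variable R : realType.
Local Notation mu := (@lebesgue_measure R).

Lemma holder_ge_half (g : R -> R) {H gamma x t : R} :
  0 < H -> 0 < gamma -> 0 <= g t -> `|g x - g t| <= H * `|x - t| `^ gamma ->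
  `|x - t| <= (g t / (2 * H)) `^ gamma^-1 -> g t / 2 <= g x.
Proof.
move=> H0 gamma0 gt0 hol xt.
have pow_le : `|x - t| `^ gamma <= g t / (2 * H).
  rewrite -[leRHS](@powRVrK _ _ gamma) ?gt_eqF//; last first.
    by rewrite divr_ge0 ?mulr_ge0// ltW.
  by apply: ge0_ler_powR; rewrite ?nnegrE ?powR_ge0// ltW.
have := le_trans hol (ler_wpM2l (ltW H0) pow_le).
have -> : H * (g t / (2 * H)) = g t / 2 by field; rewrite gt_eqF.
rewrite ler_norml; lra.
Qed.

Lemma holder_peak_le_Rintegral (g : R -> R) (H gamma l T t0 : R) :
  0 < H -> 0 < gamma -> 0 < l -> t0 \in `[0, T] -> g 0 = 0 ->
  (forall t, 0 <= t -> 0 <= g t) ->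
  (forall t s, 0 <= t -> 0 <= s -> `|g t - g s| <= H * `|t - s| `^ gamma) ->
  mu.-integrable `[0, T] (EFin \o (fun t => g t `^ l)) ->
  g t0 `^ (gamma^-1 + l) <=
    2 `^ (gamma^-1 + l) * H `^ gamma^-1 * \int[mu]_(t in `[0, T]) g t `^ l.
Proof.
move=> H0 gamma0 l0 t0T g00 g_ge0 g_hol igl.
move: (t0T); rewrite in_itv/= => /andP[t0_ge0 t0_leT].
set M := g t0; set r := (M / (2 * H)) `^ gamma^-1.
have e0 : gamma^-1 + l != 0 by rewrite gt_eqF ?addr_gt0 ?invr_gt0.
have := g_ge0 t0 t0_ge0; rewrite le_eqVlt => /predU1P[M0|M_gt0].
  rewrite /M -M0 powR0// !mulr_ge0 ?powR_ge0//.
  by apply: Rintegral_ge0 => t _; exact: powR_ge0.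
have r_le_t0 : r <= t0.
  rewrite leNgt; apply/negP => t0_lt_r.
  have := holder_ge_half g H0 gamma0 (ltW M_gt0) (g_hol 0 t0 (lexx 0) t0_ge0).
  by rewrite g00 sub0r normrN ger0_norm// => /(_ (ltW t0_lt_r)); lra.
have half_le x : x \in `[t0 - r, t0] -> (M / 2) `^ l <= g x `^ l.
  rewrite in_itv/= => /andP[x_ge x_le]; have x0 : 0 <= x by lra.
  apply: ge0_ler_powR; rewrite ?nnegrE ?g_ge0 ?divr_ge0 ?(ltW l0) ?(ltW M_gt0)//.
  apply: (holder_ge_half g H0 gamma0 (ltW M_gt0) (g_hol x t0 x0 t0_ge0)).
  by rewrite -/M -/r ler_norml; apply/andP; split; lra.
have sub : `[t0 - r, t0] `<=` `[0, T].
  by move=> x /=; rewrite !in_itv/= => /andP[x_ge x_le]; apply/andP; split; lra.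
have lower : r * (M / 2) `^ l <= \int[mu]_(t in `[0, T]) g t `^ l.
  rewrite -[X in X * _](subKr t0).
  apply: itv_cc_mul_le_Rintegral sub _ _ igl half_le => //.
    by rewrite gerBl powR_ge0.
  by move=> t _; exact: powR_ge0.
have r_eq : r = (M / 2) `^ gamma^-1 / H `^ gamma^-1.
  rewrite /r invfM mulrA powRM ?divr_ge0 ?invr_ge0 ?(ltW M_gt0) ?(ltW H0)//.
  by rewrite powRVl.
have M_eq : M `^ (gamma^-1 + l) =
    2 `^ (gamma^-1 + l) * H `^ gamma^-1 * (r * (M / 2) `^ l).
  have half_pow :
      2 `^ (gamma^-1 + l) * (M / 2) `^ (gamma^-1 + l) = M `^ (gamma^-1 + l).
    by rewrite -powRM ?divr_ge0 ?(ltW M_gt0)// mulrC divfK ?pnatr_eq0.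
  rewrite -half_pow (@powRD _ (M / 2)) ?(negbTE e0)// r_eq; field.
  by rewrite gt_eqF ?powR_gt0.
by rewrite M_eq ler_wpM2l// mulr_ge0 ?powR_ge0.
Qed.

End holder_peak.

Theorem lemma4p2 (R : realType) (gamma lambda : R)
  (hgamma : 0 < gamma < 1) (hlambda : 0 < lambda < 1) :
  exists N : R, forall (H T : R) (g : R -> R),
    1 < H -> 0 < T ->
    (forall t, 0 <= t -> 0 <= g t) ->
    {within `[0, +oo[, continuous g} ->
    (forall t s, 0 <= t -> 0 <= s -> `|g t - g s| <= H * (`|t - s| `^ gamma)) ->
    g 0 = 0 ->
    (\int[lebesgue_measure]_(t in `[0, T]) g t) `^ ((gamma * lambda + 1) / (gamma + 1))
      <= N * H `^ (gamma^-1) * \int[lebesgue_measure]_(t in `[0, T]) (g t `^ lambda).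
Proof.
case/andP: hgamma => gamma_gt0 gamma_lt1; case/andP: hlambda => lambda_gt0 lambda_lt1.
exists (2 `^ (gamma^-1 + lambda)) => H T g H_gt1 T_gt0 g_ge0 g_cont g_hol g00.
have g_contT : {within `[0, T], continuous g}.
  by apply: continuous_subspaceW g_cont => t /=; rewrite !in_itv/= => /andP[-> _].
have [t0 t0T g_max] := EVT_max (ltW T_gt0) g_contT.
have g_ge0T t : t \in `[0, T] -> 0 <= g t.
  by rewrite in_itv/= => /andP[t_ge0 _]; exact: g_ge0.
have ig : lebesgue_measure.-integrable `[0, T] (EFin \o g).
  exact: continuous_compact_integrable (@segment_compact _ 0 T) g_contT.
have igl : lebesgue_measure.-integrable `[0, T] (EFin \o (fun t => g t `^ lambda)).
  apply: (@bounded_itv_cc_integrable _ _ _ (g t0 `^ lambda)).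
    apply: measurableT_comp (@measurable_realfun.measurable_powR R lambda) _.
    by apply/measurable_realfun.measurable_EFinP; exact: measurable_int ig.
  move=> t tT; rewrite ger0_norm ?powR_ge0//.
  by apply: ge0_ler_powR; rewrite ?nnegrE ?(ltW lambda_gt0) ?g_ge0T ?g_max.
apply: (@powR_le_interpolate _ _ _ (g t0) _ _ (1 - lambda) (gamma^-1 + lambda)).
- by apply: Rintegral_ge0 => t; exact: g_ge0T.
- by apply: Rintegral_ge0 => t _; exact: powR_ge0.
- exact: g_ge0T.
- by rewrite mulr_ege1 ?powR_ge1 ?addr_ge0 ?invr_ge0 ?ler1n ?ltW.
- apply/andP; split; first by rewrite divr_ge0 ?addr_ge0 ?mulr_ge0 ?ltW.
  by rewrite ler_pdivrMr ?addr_gt0// mul1r lerD2r ger_pMr ?ltW.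
- by field; rewrite !gt_eqF ?addr_gt0.
- apply: Rintegral_le_powRB_mul => //; first by rewrite !ltW.
  by move=> t tT; rewrite g_ge0T ?g_max.
- exact: holder_peak_le_Rintegral (lt_trans ltr01 H_gt1) gamma_gt0 lambda_gt0
    t0T g00 g_ge0 g_hol igl.
Qed.
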